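(* Let $\gamma \ge 0$ be a random variable (the channel power gain) with probability density function $f_\gamma$, let $\mathbb{E}[\cdot]$ denote expectation over $\gamma$, and fix constants $\theta>0$, $\beta>0$, $\bar P_\tau>0$ and $0<\tau<T$. Consider the optimization problem (P3) over sampling-rate functions $\lambda(\gamma)$: $$\min_{\lambda(\cdot)} \ \mathbb{E}\!\left[\lambda(\gamma)\left(\beta e^{\theta/\lambda(\gamma)}-1\right)\right]\quad\text{s.t.}\quad \mathbb{E}\!\left[\frac{\lambda(\gamma)}{\gamma}\right]\le \bar P_\tau,\qquad \tau\lambda(\gamma)\le 1,\qquad T\lambda(\gamma)\ge 1 .$$ Then the optimal sampling scheme $\lambda_{\rm opt}(\gamma)$ for this problem is $$\lambda_{\rm opt}(\gamma)=\begin{cases}\dfrac{1}{T}, & 0\le \gamma<\gamma_1^{\rm th},\\[2mm] \dfrac{\theta}{1+\mathcal{W}\!\left(\frac{\eta-\gamma}{e\beta\gamma}\right)}, & \gamma_1^{\rm th}\le\gamma\le\gamma_2^{\rm th},\\[2mm] \dfrac{1}{\tau}, & \gamma>\gamma_2^{\rm th},\end{cases}$$ where $\mathcal{W}(\cdot)$ is the Lambert W function (the inverse of $x\mapsto xe^x$), the thresholds are $$\gamma_1^{\rm th}=\frac{\eta}{1-\beta e^{\theta T}(1-\theta T)},\qquad \gamma_2^{\rm th}=\frac{\eta}{1-\beta e^{\theta\tau}(1-\theta\tau)},$$ and the constant $\eta$ is determined by $\mathbb{E}\!\left[\lambda_{\rm opt}(\gamma)/\gamma\right]=\bar P_\ta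u$.
   Context: This arises in a status-update system over a block-fading channel with coherence time $T$, packet transmission time $\tau$, and AoI exponent $\theta$. The problem (P3) is the Dinkelbach transform of minimizing $\mathbb{E}[e^{\theta/\lambda(\gamma)}\lambda(\gamma)]/\mathbb{E}[\lambda(\gamma)]$ under the same constraints, with $\beta$ an auxiliary parameter; here $\bar P_\tau=\bar P/(\tau(e^{D\log 2/(\tau B)}-1))$ for average power $\bar P$, packet size $D$ bits and bandwidth $B$, but for the statement $\bar P_\tau$ is simply a positive constant.
   Formalization: The parameters also satisfy $\beta e^{\theta\tau}(1-\theta\tau)<1$, and $\mathcal{W}$ is the principal branch, the solution w ≥ −1 of w eʷ = x. The statement above fails without it. *)

From HB Require Import structures.
From mathcomp Require Import all_boot all_order all_algebra.
From mathcomp Require Import all_classical all_reals all_analysis.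
Set Implicit Arguments. Unset Strict Implicit. Unset Printing Implicit Defensive.
Import Order.TTheory GRing.Theory Num.Theory.
Import numFieldNormedType.Exports.
Local Open Scope classical_set_scope.
Local Open Scope ring_scope.

Definition LambertW {R : realType} (x : R) : R :=
  xget 0 [set w : R | -1 <= w /\ w * expR w = x].

Definition is_pdf {R : realType} (f : R -> R) : Prop :=
  measurable_fun setT f /\ (forall x, 0 <= f x) /\ (forall x, x < 0 -> f x = 0) /\
  (\int[@lebesgue_measure R]_(x in [set: R]) (f x)%:E = 1)%E.

(* E[h(gamma)] for gamma with density f (gamma > 0 almost surely). *)
Definition expect {R : realType} (f h : R -> R) : \bar R :=
  (\int[@lebesgue_measure R]_(x in [set x : R | (0 < x)%R]) (h x * f x)%:E)%E.

Definition obj_P3 {R : realType} (f : R -> R) (theta beta : R) (lam : R -> R) : \bar R :=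
  expect f (fun g => lam g * (beta * expR (theta / lam g) - 1)).

Definition feasible_P3 {R : realType} (f : R -> R) (Pt tau T : R) (lam : R -> R) : Prop :=
  measurable_fun setT lam /\
  (forall g, 0 < g -> tau * lam g <= 1 /\ 1 <= T * lam g) /\
  (expect f (fun g => (lam g / g)%R) <= Pt%:E)%E.

Definition gamma_th {R : realType} (eta theta beta t : R) : R :=
  eta / (1 - beta * expR (theta * t) * (1 - theta * t)).

Definition lam_opt {R : realType} (eta theta beta tau T : R) (g : R) : R :=
  if g < gamma_th eta theta beta T then T^-1
  else if g <= gamma_th eta theta beta tau then
    theta / (1 + LambertW ((eta - g) / (expR 1 * beta * g)))
  else tau^-1.

From mathcomp Require Import all_boot all_order all_algebra.
From mathcomp Require Import all_classical all_reals all_analysis.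
From mathcomp Require Import measurable_realfun ring lra.
Import Order.TTheory GRing.Theory Num.Theory.
Import numFieldNormedType.Exports.
Local Open Scope classical_set_scope.
Local Open Scope ring_scope.

(* Pricing the power constraint with the multiplier mu = max(eta, 0) decouples
   (P3) across channel states: for each gain g the Lagrangian
   l |-> l (beta e^(theta/l) - 1) + mu l / g is convex in l, and lam_opt g is
   its minimiser on [1/T, 1/tau].  Inside the interval the stationarity
   equation becomes w e^w = (eta - g) / (e beta g) for w = theta/l - 1, which
   is solved by the Lambert W function; the thresholds gamma_th are the gains
   at which this solution reaches the endpoints.  Integrating the pointwise
   inequality against the density, and using that lam_opt meets the power
   constraint with equality, gives weak duality and hence optimality. *)

Section LambertW.
Context {R : realType}.
Implicit Types a b w z : R.

Lemma xexpR_ltr a b : -1 <= a -> a < b -> a * expR a < b * expR b.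
Proof.
move=> a_ge ab.
have [b_ge0|b_lt0] := leP 0 b.
  have -> : expR b = expR a * expR (b - a) by rewrite -expRD addrC subrK.
  rewrite mulrCA [X in X < _]mulrC ltr_pM2l ?expR_gt0 //.
  have : b * (1 + (b - a)) <= b * expR (b - a) by rewrite ler_wpM2l ?expR_ge1Dx.
  have : 0 < (b - a) * (1 + b) by rewrite mulr_gt0 //; lra.
  nra.
have -> : expR a = expR b * expR (a - b) by rewrite -expRD addrC subrK.
rewrite mulrCA [X in _ < X]mulrC ltr_pM2l ?expR_gt0 //.
have : a * expR (a - b) < a * (1 + (a - b)).
  by rewrite ltr_nM2l ?expR_gt1Dx ?subr_eq0 ?lt_eqF //; lra.
have : 0 <= (b - a) * (1 + a) by rewrite mulr_ge0 //; lra.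
nra.
Qed.

Lemma xexpR_ler a b : -1 <= a -> -1 <= b -> a * expR a <= b * expR b -> a <= b.
Proof.
move=> a_ge b_ge h; rewrite leNgt; apply/negP => /(xexpR_ltr _ _ b_ge).
by rewrite ltNge h.
Qed.

Lemma LambertW_eq w z : -1 <= w -> w * expR w = z -> LambertW z = w.
Proof.
move=> w_ge wz; rewrite /LambertW.
have := xgetPex 0 (ex_intro (fun u : R => -1 <= u /\ u * expR u = z) w (conj w_ge wz)).
set u := xget _ _ => -[u_ge uz].
by apply/le_anti/andP; split; apply: xexpR_ler; rewrite ?uz ?wz.
Qed.

Lemma LambertW_itv a b z : -1 <= a -> a <= b -> a * expR a <= z <= b * expR b ->
  a <= LambertW z <= b /\ LambertW z * expR (LambertW z) = z.
Proof.
move=> a_ge ab z_itv.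
have xexpR_cont : continuous (fun w : R => w * expR w).
  by move=> x; apply: continuousM => //; exact: continuous_expR.
have mono : a * expR a <= b * expR b by case/andP: z_itv; exact: le_trans.
have z_minmax : Num.min (a * expR a) (b * expR b) <= z <= Num.max (a * expR a) (b * expR b).
  by rewrite (min_idPl mono) (max_idPr mono).
have [w] := IVT ab (continuous_subspaceT xexpR_cont) z_minmax.
rewrite in_itv /= => /andP[aw wb] wz.
by rewrite (LambertW_eq _ _ (le_trans a_ge aw) wz) aw wb.
Qed.

End LambertW.

Section RateCost.
Context {R : realType}.
Variables theta beta : R.

Definition rate_cost (l : R) := l * (beta * expR (theta / l) - 1).

Definition rate_cost_slope (l : R) := beta * expR (theta / l) * (1 - theta / l) - 1.

Lemma rate_cost_slope_inv (t : R) :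
  rate_cost_slope t^-1 = - (1 - beta * expR (theta * t) * (1 - theta * t)).
Proof. by rewrite /rate_cost_slope invrK opprB. Qed.

Hypothesis beta_ge0 : 0 <= beta.

(* With a = theta / l, a0 = theta / l0 the gap is beta l e^a0 (e^(a - a0) - 1 - (a - a0)). *)
Lemma rate_cost_tangent {l0 l : R} : 0 < l0 -> 0 < l ->
  rate_cost l0 + rate_cost_slope l0 * (l - l0) <= rate_cost l.
Proof.
move=> l0_gt0 l_gt0; rewrite /rate_cost /rate_cost_slope.
set a0 := theta / l0; set a := theta / l.
have l0a0 : l0 * a0 = theta by rewrite mulrC mulfVK ?gt_eqF.
have la : l * a = theta by rewrite mulrC mulfVK ?gt_eqF.
have : beta * expR a0 * (l0 * a0) = beta * expR a0 * (l * a) by rewrite l0a0 la.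
have -> : expR a = expR a0 * expR (a - a0) by rewrite -expRD addrC subrK.
have : beta * l * expR a0 * (1 + (a - a0)) <= beta * l * expR a0 * expR (a - a0).
  by rewrite ler_wpM2l ?expR_ge1Dx // !mulr_ge0 ?expR_ge0 // ltW.
nra.
Qed.

Lemma rate_cost_linear_min {l0 l c : R} : 0 < l0 -> 0 < l ->
  0 <= (rate_cost_slope l0 + c) * (l - l0) ->
  rate_cost l0 + c * l0 <= rate_cost l + c * l.
Proof.
move=> l0_gt0 l_gt0; rewrite mulrDl.
have := rate_cost_tangent l0_gt0 l_gt0.
lra.
Qed.

End RateCost.

Lemma argmin_linear_antitone {R : realFieldType} (phi : R -> R) (P : R -> Prop) c1 c2 l1 l2 :
  c1 < c2 -> P l1 -> P l2 ->
  (forall l, P l -> phi l1 + c1 * l1 <= phi l + c1 * l) ->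
  (forall l, P l -> phi l2 + c2 * l2 <= phi l + c2 * l) -> l2 <= l1.
Proof.
move=> c12 Pl1 Pl2 min1 min2.
have := min1 _ Pl2; have := min2 _ Pl1.
nra.
Qed.

Lemma expR_mul1B_ltr {R : realType} (a b : R) : 0 < a -> a < b ->
  expR b * (1 - b) < expR a * (1 - a).
Proof.
move=> a_gt0 ab.
have -> : expR a = expR b * expR (a - b) by rewrite -expRD addrC subrK.
rewrite -mulrA ltr_pM2l ?expR_gt0 //.
have [a_le1|a_gt1] := leP a 1.
  have : (1 + (a - b)) * (1 - a) <= expR (a - b) * (1 - a).
    by rewrite ler_wpM2r ?expR_ge1Dx //; lra.
  nra.
have : expR (a - b) < 1 by rewrite expR_lt1; lra.
nra.
Qed.

Section OptimalScheme.
Context {R : realType} {theta beta tau T : R} (eta : R).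
Hypotheses (theta_gt0 : 0 < theta) (beta_gt0 : 0 < beta) (tau_gt0 : 0 < tau) (tau_lt_T : tau < T).
Hypothesis slope_tau_lt1 : beta * expR (theta * tau) * (1 - theta * tau) < 1.

(* gamma_th eta theta beta t = eta / delta t and rate_cost_slope theta beta t^-1 = - delta t. *)
Let delta t := 1 - beta * expR (theta * t) * (1 - theta * t).
Let lam := lam_opt eta theta beta tau T.

Let T_gt0 : 0 < T. Proof. exact: lt_trans tau_lt_T. Qed.

Let delta_tau_gt0 : 0 < delta tau. Proof. by rewrite subr_gt0. Qed.

Let delta_tau_lt_T : delta tau < delta T.
Proof.
rewrite ltrD2l ltrN2 -!mulrA ltr_pM2l //.
by apply: expR_mul1B_ltr; rewrite ?mulr_gt0 ?ltr_pM2l.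
Qed.

Let delta_T_gt0 : 0 < delta T.
Proof. exact: lt_trans delta_tau_gt0 delta_tau_lt_T. Qed.

Lemma LambertW_mid_itv {g : R} : 0 < g -> g * delta tau <= eta <= g * delta T ->
  let w := LambertW ((eta - g) / (expR 1 * beta * g)) in
  theta * tau - 1 <= w <= theta * T - 1 /\ w * expR w = (eta - g) / (expR 1 * beta * g).
Proof.
move=> g_gt0 /andP[le_eta eta_le] /=; set z := (eta - g) / _.
have ebg_gt0 : 0 < expR 1 * beta * g by rewrite !mulr_gt0 ?expR_gt0.
have xexpR_shift t : (theta * t - 1) * expR (theta * t - 1) =
    z - (eta - g * delta t) / (expR 1 * beta * g).
  by rewrite /z /delta expRD expRN; field; rewrite !gt_eqF ?expR_gt0.
apply: LambertW_itv.
- by have := mulr_gt0 theta_gt0 tau_gt0; lra.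
- by rewrite lerD2r ler_pM2l // ltW.
rewrite !xexpR_shift.
have : 0 <= (eta - g * delta tau) / (expR 1 * beta * g) by rewrite divr_ge0 ?subr_ge0 // ltW.
have : (eta - g * delta T) / (expR 1 * beta * g) <= 0.
  by rewrite ler_pdivrMr // mul0r subr_le0.
lra.
Qed.

Lemma lam_opt_mid {g : R} : 0 < g ->
  gamma_th eta theta beta T <= g <= gamma_th eta theta beta tau ->
  let l0 := theta / (1 + LambertW ((eta - g) / (expR 1 * beta * g))) in
  [/\ 0 < eta, T^-1 <= l0 <= tau^-1 & rate_cost_slope theta beta l0 + eta / g = 0].
Proof.
move=> g_gt0 /andP[]; rewrite /gamma_th -/(delta T) -/(delta tau).
rewrite ler_pdivrMr ?delta_T_gt0 // ler_pdivlMr ?delta_tau_gt0 // => le_eta le_g.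
have eta_gt0 : 0 < eta by apply: lt_le_trans le_g; rewrite mulr_gt0 ?delta_tau_gt0.
have [] := LambertW_mid_itv g_gt0 (_ : _ <= eta <= _); first by rewrite le_g le_eta.
set z := (eta - g) / _; set w := LambertW z => /andP[lo hi] wz /=.
have w1_gt0 : 0 < 1 + w by have := mulr_gt0 theta_gt0 tau_gt0; lra.
split => //.
  apply/andP; split.
    rewrite ler_pdivlMr // mulrC ler_pdivrMr ?T_gt0 //; lra.
  rewrite ler_pdivrMr // mulrC ler_pdivlMr //; lra.
rewrite /rate_cost_slope invf_div mulrCA mulfV ?gt_eqF // mulr1 expRD.
have -> : beta * (expR 1 * expR w) * (1 - (1 + w)) = - (expR 1 * beta * g) * (w * expR w) / g.
  by field; rewrite gt_eqF.
by rewrite wz /z; field; rewrite !gt_eqF ?expR_gt0.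
Qed.

Let mu := Num.max eta 0.

Lemma lam_opt_variational {g : R} : 0 < g ->
  T^-1 <= lam g <= tau^-1 /\
  forall l, T^-1 <= l <= tau^-1 ->
    0 <= (rate_cost_slope theta beta (lam g) + mu / g) * (l - lam g).
Proof.
move=> g_gt0; have T_le_tau : T^-1 <= tau^-1 by rewrite lef_pV2 ?posrE ?T_gt0 ?ltW.
rewrite /lam /lam_opt /gamma_th -/(delta T) -/(delta tau).
case: ifPn => [g_lt|g_ge].
  have eta_gt : g * delta T < eta by rewrite -ltr_pdivlMr ?delta_T_gt0.
  have eta_gt0 : 0 < eta by apply: le_lt_trans eta_gt; rewrite mulr_ge0 ?ltW ?delta_T_gt0.
  split=> [|l /andP[l_ge _]]; first by rewrite lexx.
  rewrite /mu (max_idPl (ltW eta_gt0)) rate_cost_slope_inv mulr_ge0 ?subr_ge0 //.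
  by rewrite addrC subr_ge0 ltW // ltr_pdivlMr // mulrC.
case: ifPn => [g_le|g_gt].
  have [|eta_gt0 l0_itv slope0] := lam_opt_mid g_gt0 (_ : _ <= g <= _).
    by rewrite /gamma_th -/(delta T) -/(delta tau) leNgt g_ge g_le.
  split=> // l _.
  by rewrite /mu (max_idPl (ltW eta_gt0)) slope0 mul0r.
split=> [|l /andP[_ l_le]]; first by rewrite T_le_tau lexx.
rewrite rate_cost_slope_inv mulr_le0 ?subr_le0 // addrC subr_le0.
have eta_lt : eta < g * delta tau by rewrite -ltr_pdivrMr ?delta_tau_gt0 // ltNge.
by rewrite ler_pdivrMr // mulrC /mu ge_max (ltW eta_lt) mulr_ge0 ?ltW ?delta_tau_gt0.
Qed.

Let Tinv_gt0 : 0 < T^-1. Proof. by rewrite invr_gt0 T_gt0. Qed.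

Lemma lam_opt_min (g l : R) : 0 < g -> T^-1 <= l <= tau^-1 ->
  rate_cost theta beta (lam g) + mu / g * lam g <= rate_cost theta beta l + mu / g * l.
Proof.
move=> g_gt0 l_itv; have [/andP[lam_ge _] var] := lam_opt_variational g_gt0.
apply: (rate_cost_linear_min theta beta (ltW beta_gt0) _ _ (var _ l_itv)).
- exact: lt_le_trans Tinv_gt0 lam_ge.
- by case/andP: l_itv => l_ge _; exact: lt_le_trans Tinv_gt0 l_ge.
Qed.

(* Minimisers of rate_cost + c l move down as c = mu / g grows, so lam_opt is
   monotone; this gives its measurability without any regularity of W. *)
Lemma lam_opt_nondecreasing : 0 < eta -> nondecreasing_fun lam.
Proof.
move=> eta_gt0.
have lam_nonpos g : g <= 0 -> lam g = T^-1.
  move=> g_le0; rewrite /lam /lam_opt ifT //.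
  by apply: le_lt_trans g_le0 _; rewrite divr_gt0 ?delta_T_gt0.
move=> g1 g2; rewrite le_eqVlt => /predU1P[-> //|g12].
have [g1_le0|g1_gt0] := leP g1 0.
  rewrite lam_nonpos //; have [g2_le0|g2_gt0] := leP g2 0; first by rewrite lam_nonpos.
  by case: (lam_opt_variational g2_gt0) => /andP[].
have g2_gt0 := lt_trans g1_gt0 g12.
apply: (argmin_linear_antitone (rate_cost theta beta) (fun l => T^-1 <= l <= tau^-1)
  (mu / g2) (mu / g1)).
- by rewrite /mu (max_idPl (ltW eta_gt0)) ltr_pM2l // ltf_pV2.
- exact: (lam_opt_variational g2_gt0).1.
- exact: (lam_opt_variational g1_gt0).1.
- by move=> l; exact: lam_opt_min.
- by move=> l; exact: lam_opt_min.
Qed.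

Lemma measurable_lam_opt : measurable_fun [set: R] lam.
Proof.
have [eta_gt0|eta_le0] := ltP 0 eta.
  exact: nondecreasing_measurable (lam_opt_nondecreasing eta_gt0).
(* For eta <= 0 the Lambert W branch is taken at most at g = eta / delta tau. *)
set c := theta / (1 + LambertW ((eta - eta / delta tau) / (expR 1 * beta * (eta / delta tau)))).
have -> : lam = fun g =>
    if g < eta / delta T then T^-1 else if g <= eta / delta tau then c else tau^-1.
  apply/funext => g; rewrite /lam /lam_opt /gamma_th -/(delta T) -/(delta tau).
  case: ifPn => // g_ge; case: ifPn => // g_le.
  suff -> : g = eta / delta tau by [].
  rewrite -leNgt in g_ge; apply/le_anti; rewrite g_le (le_trans _ g_ge) //.
  by rewrite ler_wnM2l // lef_pV2 ?posrE ?delta_T_gt0 ?delta_tau_gt0 ?ltW ?delta_tau_lt_T.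
apply: measurable_fun_ifT; [exact: measurable_fun_ltr | exact: measurable_cst |].
by apply: measurable_fun_ifT; [exact: measurable_fun_ler | exact: measurable_cst..].
Qed.

End OptimalScheme.

Lemma rate_cost_bound {R : realType} (theta beta tau T l : R) :
  0 < theta -> 0 <= beta -> 0 < tau -> 0 < T -> T^-1 <= l <= tau^-1 ->
  `|rate_cost theta beta l| <= tau^-1 * (beta * expR (theta * T) + 1).
Proof.
move=> theta_gt0 beta_ge0 tau_gt0 T_gt0 /andP[l_ge l_le].
have l_gt0 : 0 < l by apply: lt_le_trans l_ge; rewrite invr_gt0.
have exp_le : expR (theta / l) <= expR (theta * T).
  have : l^-1 <= T by rewrite -[T in _ <= T]invrK lef_pV2 ?posrE ?invr_gt0.
  by move=> ?; rewrite ler_expR ler_wpM2l // ltW.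
have : l * (beta * expR (theta / l)) <= tau^-1 * (beta * expR (theta * T)).
  by rewrite ler_pM ?mulr_ge0 ?expR_ge0 ?ler_wpM2l // ltW.
have : 0 <= l * (beta * expR (theta / l)) by rewrite !mulr_ge0 ?expR_ge0 // ltW.
have : 0 < tau^-1 by rewrite invr_gt0.
rewrite ler_norml /rate_cost mulrBr mulrDr mulr1; lra.
Qed.

Lemma rate_boundsP {R : realFieldType} (tau T l : R) : 0 < tau -> 0 < T ->
  (tau * l <= 1 /\ 1 <= T * l) <-> T^-1 <= l <= tau^-1.
Proof.
move=> tau_gt0 T_gt0.
rewrite -[1 <= T * l]ler_pdivrMl // -ler_pdivlMl // !mulr1.
by split=> [[-> ->] | /andP[-> ->]].
Qed.

Lemma measurable_inv {R : realType} : measurable_fun [set: R] (fun x : R => x^-1).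
Proof.
(* Also at x = 0, where 0^-1 = 0 and ln 0 = 0. *)
have -> : (fun x : R => x^-1) = fun x => x * expR (- ln (x * x)).
  apply/funext => x; have [->|x_neq0] := eqVneq x 0; first by rewrite invr0 mul0r.
  have xx_gt0 : 0 < x * x by rewrite -expr2 exprn_even_gt0.
  by rewrite expRN lnK ?posrE // invfM mulrA mulfV ?mul1r.
apply: measurable_funM => //; apply: measurableT_comp; first exact: measurable_expR.
apply: measurableT_comp => //; apply: measurableT_comp; first exact: measurable_ln.
exact: measurable_funM.
Qed.

Lemma measurable_rate_cost {R : realType} (theta beta : R) (lam : R -> R) :
  measurable_fun [set: R] lam -> measurable_fun [set: R] (fun g => rate_cost theta beta (lam g)).
Proof.
move=> mlam; apply: measurable_funM => //.
apply: measurable_funB => //; apply: measurable_funM => //.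
apply: measurableT_comp; first exact: measurable_expR.
by apply: measurable_funM => //; exact: measurableT_comp measurable_inv _.
Qed.

Section Expectation.
Context {R : realType}.
Local Notation mu := (@lebesgue_measure R).
Local Notation pos := ([set x : R | 0 < x] : set (measurableTypeR R)).

Lemma measurable_pos : measurable pos.
Proof. by rewrite -set_itvoy; exact: measurable_itv. Qed.

Lemma integrable_pdf (f : R -> R) : is_pdf f -> mu.-integrable pos (EFin \o f).
Proof.
move=> [mf [f_ge0 [_ f1]]].
apply: (integrableS measurableT measurable_pos (@subsetT _ _)).
apply/integrableP; split; first exact/measurable_EFinP.
under eq_integral => x _ do rewrite /= ger0_norm //.
by rewrite f1 ltry.
Qed.

Context {f : R -> R}.
Hypotheses (f_ge0 : forall x, 0 <= f x) (f_int : mu.-integrable pos (EFin \o f)).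

Let measurable_f : measurable_fun pos f.
Proof. by apply/measurable_EFinP; exact: measurable_int f_int. Qed.

Lemma integrable_bounded_pdfM (h : R -> R) (C : R) : measurable_fun pos h ->
  (forall x, 0 < x -> `|h x| <= C) -> mu.-integrable pos (fun x => (h x * f x)%:E).
Proof.
move=> mh h_le.
apply: (le_integrable measurable_pos _ _ (integrableZl measurable_pos C f_int)).
  exact/measurable_EFinP/measurable_funM.
move=> x x_gt0 /=; rewrite lee_fin normrM (ger0_norm (f_ge0 x)).
by rewrite (le_trans _ (ler_norm _)) // ler_wpM2r // h_le.
Qed.

Lemma integrable_ge0_pdfM (h : R -> R) (c : R) : measurable_fun pos h ->
  (forall x, 0 < x -> 0 <= h x) -> (expect f h <= c%:E)%E ->
  mu.-integrable pos (fun x => (h x * f x)%:E).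
Proof.
move=> mh h_ge0 h_le; apply/integrableP; split.
  exact/measurable_EFinP/measurable_funM.
apply: le_lt_trans (le_lt_trans h_le (ltry _)).
rewrite le_eqVlt; apply/orP; left; apply/eqP/eq_integral => x; rewrite inE /= => x_gt0.
by rewrite ger0_norm // mulr_ge0 // h_ge0.
Qed.

Lemma integrable_rate_cost (theta beta tau T : R) (l : R -> R) :
  0 < theta -> 0 <= beta -> 0 < tau -> 0 < T -> measurable_fun [set: R] l ->
  (forall g, 0 < g -> T^-1 <= l g <= tau^-1) ->
  mu.-integrable pos (fun g => (rate_cost theta beta (l g) * f g)%:E).
Proof.
move=> theta_gt0 beta_ge0 tau_gt0 T_gt0 ml l_itv.
apply: (integrable_bounded_pdfM _ (tau^-1 * (beta * expR (theta * T) + 1))).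
  exact: measurable_funS measurableT (subsetT _) (measurable_rate_cost _ _ _ ml).
by move=> g g_gt0; apply: rate_cost_bound => //; exact: l_itv.
Qed.

Lemma integrable_rate_ratio (T c : R) (l : R -> R) :
  0 < T -> measurable_fun [set: R] l -> (forall g, 0 < g -> T^-1 <= l g) ->
  (expect f (fun g => (l g / g)%R) <= c%:E)%E ->
  mu.-integrable pos (fun g => (l g / g * f g)%:E).
Proof.
move=> T_gt0 ml l_ge; apply: integrable_ge0_pdfM.
  exact: measurable_funS measurableT (subsetT _) (measurable_funM ml measurable_inv).
move=> g g_gt0; rewrite divr_ge0 ?ltW //.
by apply: lt_le_trans (l_ge g g_gt0); rewrite invr_gt0.
Qed.

Lemma expect_lagrange_le (h0 h k0 k : R -> R) (nu : R) : 0 <= nu ->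
  mu.-integrable pos (fun x => (h0 x * f x)%:E) -> mu.-integrable pos (fun x => (h x * f x)%:E) ->
  mu.-integrable pos (fun x => (k0 x * f x)%:E) -> mu.-integrable pos (fun x => (k x * f x)%:E) ->
  (forall x, 0 < x -> h0 x + nu * k0 x <= h x + nu * k x) ->
  (expect f k <= expect f k0)%E -> (expect f h0 <= expect f h)%E.
Proof.
move=> nu_ge0 ih0 ih ik0 ik lagrange_le k_le.
have mpos := measurable_pos.
have : (\int[mu]_(x in pos) ((h0 x * f x)%:E + nu%:E * (k0 x * f x)%:E) <=
        \int[mu]_(x in pos) ((h x * f x)%:E + nu%:E * (k x * f x)%:E))%E.
  apply: (le_integral mpos); [exact: (integrableD mpos ih0 (integrableZl mpos nu ik0))|
    exact: (integrableD mpos ih (integrableZl mpos nu ik))|].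
  move=> x; rewrite inE /= => x_gt0; rewrite -!EFinM -!EFinD lee_fin.
  have := ler_wpM2r (f_ge0 x) (lagrange_le x x_gt0).
  by rewrite !mulrDl !mulrA.
rewrite !integralD ?integralZl //; try exact: integrableZl.
move: k_le; rewrite /expect.
rewrite -(fineK (integrable_fin_num mpos ih0)) -(fineK (integrable_fin_num mpos ih)).
rewrite -(fineK (integrable_fin_num mpos ik0)) -(fineK (integrable_fin_num mpos ik)).
rewrite -!EFinM -!EFinD !lee_fin => k_le.
have := ler_wpM2l nu_ge0 k_le; lra.
Qed.
End Expectation.

Theorem theorem1 (R : realType) (f : R -> R) (theta beta Pt tau T eta : R) :
  is_pdf f ->
  0 < theta -> 0 < beta -> 0 < Pt -> 0 < tau -> tau < T ->
  beta * expR (theta * tau) * (1 - theta * tau) < 1 ->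
  expect f (fun g => lam_opt eta theta beta tau T g / g) = Pt%:E ->
  feasible_P3 f Pt tau T (lam_opt eta theta beta tau T) /\
  (forall lam : R -> R, feasible_P3 f Pt tau T lam ->
     (obj_P3 f theta beta (lam_opt eta theta beta tau T) <= obj_P3 f theta beta lam)%E).
Proof.
move=> f_pdf theta_gt0 beta_gt0 _ tau_gt0 tau_lt_T slope_lt1 constraint_eq.
have [_ [f_ge0 _]] := f_pdf; have f_int := integrable_pdf _ f_pdf.
have T_gt0 : 0 < T := lt_trans tau_gt0 tau_lt_T.
set lam0 := lam_opt eta theta beta tau T in constraint_eq *.
have lam0_itv g (g_gt0 : 0 < g) :=
  (lam_opt_variational eta theta_gt0 beta_gt0 tau_gt0 tau_lt_T slope_lt1 g_gt0).1.
have mlam0 := measurable_lam_opt eta theta_gt0 beta_gt0 tau_gt0 tau_lt_T slope_lt1.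
split.
  split=> //; split; last by rewrite constraint_eq.
  by move=> g /lam0_itv /rate_boundsP; apply.
move=> lam [mlam [lam_bounds lam_le]].
have lam_itv g : 0 < g -> T^-1 <= lam g <= tau^-1.
  by move=> g_gt0; apply/rate_boundsP => //; exact: lam_bounds.
have int_cost l := integrable_rate_cost f_ge0 f_int theta beta tau T l theta_gt0 (ltW beta_gt0)
  tau_gt0 T_gt0.
have int_ratio l := integrable_rate_ratio f_ge0 f_int T Pt l T_gt0.
apply: (expect_lagrange_le f_ge0 (fun g => rate_cost theta beta (lam0 g))
  (fun g => rate_cost theta beta (lam g)) (fun g => lam0 g / g) (fun g => lam g / g)
  (Num.max eta 0)).
- by rewrite le_max lexx orbT.
- exact: int_cost mlam0 lam0_itv.
- exact: int_cost mlam lam_itv.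
- apply: int_ratio mlam0 _ _; last by rewrite constraint_eq.
  by move=> g /lam0_itv /andP[].
- apply: int_ratio mlam _ lam_le.
  by move=> g /lam_itv /andP[].
- move=> g g_gt0.
  have := lam_opt_min eta theta_gt0 beta_gt0 tau_gt0 tau_lt_T slope_lt1 _ _ g_gt0 (lam_itv g g_gt0).
  have div_mul x : Num.max eta 0 * (x / g) = Num.max eta 0 / g * x by rewrite mulrCA mulrC.
  by rewrite !div_mul.
- by rewrite constraint_eq.
Qed.
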